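(* Let $\varepsilon,K>0$ be constants with $\varepsilon<1/6$. Let $n$ be sufficiently large in terms of $\varepsilon,K$ and let $G$ be an $n$-vertex graph with $\Delta(G)\leq Kn^{1/3+\varepsilon}$. Suppose $G$ has $q$ copies of $C_4$ and every edge lies in at most $\frac{96\log n}{n^{4/3+\varepsilon}}q$ copies of $C_4$. Then there exist $v\in V(G)$, a positive real $s$ and a symmetric set $\mathcal{D}\subset V(G)^3$ with $|\mathcal{D}|\geq \frac{q}{n\log n}$ such that: (1) for each $(x,y,z)\in\mathcal{D}$, the vertices $v,x,y,z$ are distinct and $vx,xy,yz,zv\in E(G)$; (2) for each $(x,y,z)\in\mathcal{D}$, $d(v,y)\leq s$ and $d(x,z)\leq s$; (3) for every $x\in V(G)$, there are at most $\frac{384(\log n)q}{n^{4/3+\varepsilon}s}$ vertices $y\in V(G)$ for which some $z\in V(G)$ satisfies $(x,y,z)\in\mathcal{D}$.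
   Context: A set $\mathcal{D}$ of triples is symmetric if $(x,y,z)\in\mathcal{D}$ implies $(z,y,x)\in\mathcal{D}$. $d(u,w)$ is the codegree (number of common neighbours) of $u,w$. A copy of $C_4$ is a subgraph isomorphic to the $4$-cycle; $\log$ is the natural logarithm. *)

From mathcomp Require Import all_boot.
From Stdlib Require Import Reals.
Set Implicit Arguments. Unset Strict Implicit. Unset Printing Implicit Defensive.

Section Graphs.
Variable T : finType.
Variable e : rel T.

Definition simple_graph : Prop := symmetric e /\ irreflexive e.

Definition edge2 (u v : T) : {set T} := [set u; v].

Definition deg (v : T) : nat := #|[set w | e v w]|.
Definition codeg (u w : T) : nat := #|[set x | e u x && e w x]|.

Definition is_c4 (t : T * T * T * T) : bool :=
  let: (a, b, c, d) := t in
  [&& uniq [:: a; b; c; d], e a b, e b c, e c d & e d a].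

Definition c4_edges (t : T * T * T * T) : {set {set T}} :=
  let: (a, b, c, d) := t in
  [set edge2 a b; edge2 b c; edge2 c d; edge2 d a].

(* The copies of C4 in the graph, each copy identified with its edge set
   (a subgraph isomorphic to C4 has no isolated vertices, so it is
   determined by its edges). *)
Definition C4_copies : {set {set {set T}}} :=
  [set c4_edges t | t in [set t | is_c4 t]].

Definition C4_through (u v : T) : nat :=
  #|[set C in C4_copies | edge2 u v \in C]|.

End Graphs.

(* Reals comes first so that [^] on nat denotes ssrnat's [expn]. *)
From Stdlib Require Import Reals Lra.
From mathcomp Require Import all_boot.
Set Implicit Arguments. Unset Strict Implicit. Unset Printing Implicit Defensive.

(* Call a 4-cycle a-b-c-d (a tuple on four distinct vertices) balanced when
   its diagonal through the first vertex has the larger codegree,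
   codeg(b,d) <= codeg(a,c).  Every copy of C4 can be traversed from a
   vertex of its "heavier" diagonal in four different balanced ways, so
   there are at least 4q balanced tuples.  Sorting them by the starting
   vertex v and the dyadic level k of the codegree of the diagonal through v
   gives at most n (log2 n + 1) <= 4 n ln n classes, so by pigeonhole one
   class, the
   "layer" D = {(x,y,z) : v-x-y-z balanced, codeg(v,y) in [2^k, 2^(k+1))},
   has size at least q / (n ln n).  With s = 2^(k+1), D is symmetric under
   x <-> z (flipping the cycle keeps it balanced), both diagonals of its
   cycles have codegree at most s, and for a fixed x every y of the fan of x
   in D has at least 2^(k-1) closing vertices z, each giving a distinct
   4-cycle through the edge vx; the hypothesis on C4-counts per edge then
   bounds the fan. *)

Lemma card_fibres (X Y : finType) (A : {set X}) (B : {set Y}) (f : X -> Y) :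
  {in A, forall x, f x \in B} ->
  #|A| = \sum_(y in B) #|[set x in A | f x == y]|.
Proof.
move=> fAB; rewrite -sum1_card (partition_big f (mem B)) //=.
by apply: eq_bigr => y _; rewrite -sum1_card; apply: eq_bigl => x; rewrite !inE.
Qed.

Lemma pigeonhole_fibre (X Y : finType) (A : {set X}) (f : X -> Y) (y0 : Y) :
  exists y, #|A| <= #|Y| * #|[set x in A | f x == y]|.
Proof.
have [y _ y_max] := @arg_maxnP Y y0 xpredT (fun y => #|[set x in A | f x == y]|) isT.
exists y; rewrite (@card_fibres _ _ A setT f) => [|x _]; last exact: in_setT.
rewrite -cardsT -sum_nat_const; apply: leq_sum => y' _; exact: y_max.
Qed.

Section FourCycles.
Variables (T : finType) (e : rel T).
Hypothesis e_sym : symmetric e.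
Hypothesis e_irr : irreflexive e.

Lemma edge2C (a b : T) : edge2 a b = edge2 b a.
Proof. by rewrite /edge2 setUC. Qed.

Lemma edge2E (a b c d : T) :
  (edge2 a b == edge2 c d) = ((a == c) && (b == d)) || ((a == d) && (b == c)).
Proof.
apply/eqP/idP => [/setP eq_ab_cd | /orP[] /andP[/eqP-> /eqP->] //]; last exact: edge2C.
move: (eq_ab_cd a) (eq_ab_cd b) (eq_ab_cd c) (eq_ab_cd d).
rewrite /edge2 !inE !eqxx /= ?orbT.
by move=> /esym/orP[] /eqP ? /esym/orP[] /eqP ? /orP[] /eqP ? /orP[] /eqP ?;
  subst; rewrite ?eqxx ?orbT.
Qed.

Lemma codegC (u w : T) : codeg e u w = codeg e w u.
Proof. by apply: eq_card => x; rewrite !inE andbC. Qed.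

Definition c4_rot (t : T * T * T * T) : T * T * T * T :=
  let: (a, b, c, d) := t in (b, c, d, a).
Definition c4_flip (t : T * T * T * T) : T * T * T * T :=
  let: (a, b, c, d) := t in (a, d, c, b).

Lemma is_c4_rot t : is_c4 e t -> is_c4 e (c4_rot t).
Proof.
case: t => [[[a b] c] d] /and5P[uniq_t ab bc cd da]; apply/and5P; split => //.
by rewrite -(rot_uniq 1) in uniq_t.
Qed.

Lemma is_c4_flip t : is_c4 e t -> is_c4 e (c4_flip t).
Proof.
case: t => [[[a b] c] d] /and5P[uniq_t ab bc cd da]; apply/and5P.
by split; rewrite 1?e_sym // -rev_uniq -(rot_uniq 3).
Qed.

Lemma c4_edges_rot t : c4_edges (c4_rot t) = c4_edges t.
Proof.
case: t => [[[a b] c] d]; apply/setP => E; rewrite !inE.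
by case: (E == edge2 a b); case: (E == edge2 b c); case: (E == edge2 c d); case: (E == edge2 d a).
Qed.

Lemma c4_edges_flip t : c4_edges (c4_flip t) = c4_edges t.
Proof.
case: t => [[[a b] c] d]; rewrite /= (edge2C a d) (edge2C d c) (edge2C c b) (edge2C b a).
apply/setP => E; rewrite !inE.
by case: (E == edge2 a b); case: (E == edge2 b c); case: (E == edge2 c d); case: (E == edge2 d a).
Qed.

Definition balanced (t : T * T * T * T) : bool :=
  let: (a, b, c, d) := t in is_c4 e t && (codeg e b d <= codeg e a c).

Lemma balanced_c4 t : balanced t -> is_c4 e t.
Proof. by case: t => [[[a b] c] d] /andP[]. Qed.

(* Rotating by one step swaps the two diagonals, so one of t and its
   rotation is balanced. *)
Definition balance (t : T * T * T * T) : T * T * T * T :=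
  let: (a, b, c, d) := t in if codeg e b d <= codeg e a c then t else c4_rot t.

Lemma balance_balanced t : is_c4 e t -> balanced (balance t).
Proof.
case: t => [[[a b] c] d] c4_t; rewrite [balance _]/=.
case: leqP => [le_diag | /ltnW lt_diag]; apply/andP; split => //.
  exact: (is_c4_rot c4_t).
by rewrite codegC.
Qed.

Lemma c4_edges_balance t : c4_edges (balance t) = c4_edges t.
Proof.
case: t => [[[a b] c] d]; rewrite [balance _]/=; case: ifP => // _.
exact: (c4_edges_rot (a, b, c, d)).
Qed.

(* The four traversals of a-b-c-d that start on the diagonal {a,c}:
   a-b-c-d, c-d-a-b, a-d-c-b and c-b-a-d. *)
Definition orient (i : 'I_4) (t : T * T * T * T) : T * T * T * T :=
  match val i with
  | 0 => t
  | 1 => c4_rot (c4_rot t)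
  | 2 => c4_flip t
  | _ => c4_rot (c4_rot (c4_flip t))
  end.

Lemma orient_balanced i t : balanced t -> balanced (orient i t).
Proof.
case: t => [[[a b] c] d] /andP[c4_t diag].
have c4_t' := is_c4_flip c4_t.
case: i => [[|[|[|[|i]]]] lt_i4] //; apply/andP; split => //.
- exact: (is_c4_rot (is_c4_rot c4_t)).
- by rewrite codegC [codeg e c a]codegC.
- by rewrite codegC.
- exact: (is_c4_rot (is_c4_rot c4_t')).
- by rewrite [codeg e c a]codegC.
Qed.

Lemma c4_edges_orient i t : c4_edges (orient i t) = c4_edges t.
Proof.
rewrite /orient; case: (val i) => [|[|[|j]]] //; rewrite ?c4_edges_rot //;
  exact: c4_edges_flip.
Qed.

Lemma orient_inj t : is_c4 e t -> injective (orient^~ t).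
Proof.
case: t => [[[a b] c] d] /and5P[uniq_t _ _ _ _] i j; rewrite /orient.
case: i => [[|[|[|[|i]]]] lt_i4] //; case: j => [[|[|[|[|j]]]] lt_j4] //= eq_ij;
  apply/val_inj => //=; case: eq_ij => *; subst;
  by move: uniq_t; rewrite /= ?inE ?eqxx ?orbT ?andbF.
Qed.

Lemma four_balanced_per_copy : 4 * #|C4_copies e| <= #|[set t | balanced t]|.
Proof.
rewrite (@card_fibres _ _ _ (C4_copies e) (@c4_edges T)) => [|t]; last first.
  by rewrite inE => /balanced_c4 c4_t; apply: imset_f; rewrite inE.
rewrite mulnC -sum_nat_const; apply: leq_sum => C /imsetP[t0]; rewrite inE => c4_t0 ->.
have bal_t := balance_balanced c4_t0.
rewrite -[4]card_ord -(card_imset _ (orient_inj (balanced_c4 bal_t))).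
apply/subset_leq_card/subsetP => _ /imsetP[i _ ->].
by rewrite !inE orient_balanced // c4_edges_orient c4_edges_balance eqxx.
Qed.

Definition c4_closers (v x y : T) : {set T} := [set z | is_c4 e (v, x, y, z)].

Lemma codeg_c4_closers v x y z0 :
  is_c4 e (v, x, y, z0) -> codeg e v y = #|c4_closers v x y|.+1.
Proof.
move=> /and5P[uniq_0 vx xy _ _].
have -> : c4_closers v x y = [set w | e v w && e y w] :\ x.
  apply/setP => z; rewrite !inE; apply/and5P/andP => [[uniq_z _ _ yz zv] | ].
    move: uniq_z; rewrite /= !inE !negb_or => /and4P[_ /andP[_ x_ne_z] _ _].
    by rewrite eq_sym x_ne_z e_sym zv yz.
  move=> [z_ne_x /andP[vz yz]]; split; rewrite ?(e_sym z) //.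
  have v_ne_z : v != z by apply: contraTneq vz => ->; rewrite e_irr.
  have y_ne_z : y != z by apply: contraTneq yz => ->; rewrite e_irr.
  move: uniq_0; rewrite /= !inE !negb_or => /and4P[/and3P[-> -> _] /andP[-> _] _ _].
  by rewrite v_ne_z y_ne_z eq_sym z_ne_x.
by rewrite /codeg (cardsD1 x) !inE vx (e_sym y) xy.
Qed.

Lemma c4_edges_tail_inj (v x y z y' z' : T) :
  uniq [:: v; x; y; z] -> uniq [:: v; x; y'; z'] ->
  c4_edges (v, x, y, z) = c4_edges (v, x, y', z') -> (y, z) = (y', z').
Proof.
move=> uniq_t uniq_t' eq_edges.
have edge_in (a b : T) : edge2 a b \in c4_edges (v, x, y, z) ->
    edge2 a b \in c4_edges (v, x, y', z') by rewrite eq_edges.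
have := edge_in x y; have := edge_in y z; rewrite !inE !eqxx ?orbT !edge2E => /(_ isT) + /(_ isT).
by move=> H H'; repeat (case/orP: H => H); repeat (case/orP: H' => H');
  case/andP: H => /eqP ? /eqP ?; case/andP: H' => /eqP ? /eqP ?; subst;
  move: uniq_t uniq_t'; rewrite /= ?inE ?eqxx ?orbT ?andbF.
Qed.

(* Distinct closed paths v-x-y-z give distinct copies of C4 through vx. *)
Lemma c4_closers_le_through v x (Y : {set T}) :
  \sum_(y in Y) #|c4_closers v x y| <= C4_through e v x.
Proof.
pose A := [set p : T * T | (p.1 \in Y) && is_c4 e (v, x, p.1, p.2)].
have -> : \sum_(y in Y) #|c4_closers v x y| = #|A|.
  rewrite (@card_fibres _ _ A Y fst) => [|p]; last by rewrite inE => /andP[].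
  apply: eq_bigr => y y_in.
  have pair_inj : injective (@pair T T y) by move=> z z' [->].
  rewrite -(card_imset (c4_closers v x y) pair_inj).
  apply: eq_card => -[y' z]; rewrite !inE.
  apply/imsetP/andP => [[z' z'_in [-> ->]] | [/andP[_ c4_z] /eqP /= eq_y]].
    rewrite inE in z'_in; split; last exact: eqxx.
    by apply/andP; split.
  by subst y'; exists z; rewrite ?inE.
have tail_inj : {in A &, injective (fun p => c4_edges (v, x, p.1, p.2))}.
  move=> [y z] [y' z']; rewrite !inE => /andP[_ /and5P[uniq_t _ _ _ _]].
  by move=> /andP[_ /and5P[uniq_t' _ _ _ _]]; exact: c4_edges_tail_inj.
rewrite -(card_in_imset tail_inj); apply/subset_leq_card/subsetP => C /imsetP[p].
rewrite inE => /andP[_ c4_p] ->; rewrite !inE eqxx andbT.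
by apply: imset_f; rewrite inE.
Qed.

(* Fan bound: if every y in Y lies on a 4-cycle v-x-y-z and has
   codeg(v,y) >= m, then |Y| m <= 2 (number of C4s through vx); indeed
   each such y has codeg(v,y) - 1 >= codeg(v,y)/2 closing vertices. *)
Lemma c4_fan v x (Y : {set T}) m :
  (forall y, y \in Y -> m <= codeg e v y /\ exists z, is_c4 e (v, x, y, z)) ->
  #|Y| * m <= 2 * C4_through e v x.
Proof.
move=> fanY; rewrite -sum_nat_const.
apply: (@leq_trans (\sum_(y in Y) 2 * #|c4_closers v x y|)).
  apply: leq_sum => y /fanY[le_m [z c4_z]]; apply: leq_trans le_m _.
  rewrite (codeg_c4_closers c4_z) mul2n -addnn -addn1 leq_add2l.
  by apply/card_gt0P; exists z; rewrite inE.
by rewrite -big_distrr leq_mul2l c4_closers_le_through orbT.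
Qed.

Definition level (v y : T) : nat := trunc_log 2 (codeg e v y).

Definition layer (v : T) (k : nat) : {set T * T * T} :=
  [set u | balanced (v, u.1.1, u.1.2, u.2) && (level v u.1.2 == k)].

Lemma layer_c4 v k x y z : (x, y, z) \in layer v k -> is_c4 e (v, x, y, z).
Proof. by rewrite inE => /andP[/balanced_c4]. Qed.

Lemma layer_sym v k x y z : (x, y, z) \in layer v k -> (z, y, x) \in layer v k.
Proof.
rewrite !inE => /andP[/andP[c4_t diag] ->]; rewrite andbT.
by apply/andP; split; [exact: (is_c4_flip c4_t) | rewrite codegC].
Qed.

Lemma layer_codeg v k x y z : (x, y, z) \in layer v k ->
  [/\ 2 ^ k <= codeg e v y, codeg e x z <= codeg e v y & codeg e v y < 2 ^ k.+1].
Proof.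
move=> in_layer; have c4_t := layer_c4 in_layer.
move: in_layer; rewrite inE => /andP[/andP[_ diag] /eqP level_k].
rewrite /= in diag level_k; rewrite -level_k /level; split => //.
- by apply: trunc_logP; rewrite // (codeg_c4_closers c4_t).
- exact: trunc_log_ltn.
Qed.

Lemma layer_fan v k x :
  #|[set y | [exists z, (x, y, z) \in layer v k]]| * 2 ^ k <= 2 * C4_through e v x.
Proof.
apply: c4_fan => y; rewrite inE => /existsP[z in_layer].
by have [? _ _] := layer_codeg in_layer; split => //; exists z; exact: layer_c4 in_layer.
Qed.

Lemma large_layer : 0 < #|T| -> exists v k,
  4 * #|C4_copies e| <= #|T| * (trunc_log 2 #|T|).+1 * #|layer v k|.
Proof.
move=> /card_gt0P[u0 _]; set M := trunc_log 2 #|T|.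
pose key (t : T * T * T * T) : T * 'I_M.+1 := (t.1.1.1, inord (level t.1.1.1 t.1.2)).
have [[v k] le_fibre] := pigeonhole_fibre [set t | balanced t] key (u0, ord0).
exists v, k; apply: leq_trans four_balanced_per_copy _; apply: leq_trans le_fibre _.
rewrite card_prod card_ord leq_mul2l; apply/orP; right.
pose lift (u : T * T * T) : T * T * T * T := (v, u.1.1, u.1.2, u.2).
apply: leq_trans (leq_imset_card lift (layer v k)); apply/subset_leq_card/subsetP.
move=> [[[a b] c] d]; rewrite !inE => /andP[bal_t /eqP [a_v level_k]]; subst a.
have -> : (v, b, c, d) = lift (b, c, d) by [].
rewrite imset_f // inE bal_t -level_k inordK; first exact: eqxx.
by rewrite ltnS leq_trunc_log // max_card.
Qed.

End FourCycles.

Open Scope R_scope.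

Lemma INR_le (a b : nat) : (a <= b)%N -> INR a <= INR b.
Proof. by move/leP; exact: le_INR. Qed.

Lemma INR_muln (a b : nat) : INR (a * b) = INR a * INR b.
Proof. by rewrite -multE mult_INR. Qed.

Lemma INR_expn2 (k : nat) : INR (expn 2 k) = 2 ^ k.
Proof. by elim: k => [|k IHk] //; rewrite expnS INR_muln IHk. Qed.

Lemma ln_le (x y : R) : 0 < x -> x <= y -> ln x <= ln y.
Proof.
move=> x_pos [lt_xy | ->]; last exact: Rle_refl.
exact/Rlt_le/ln_increasing.
Qed.

(* The number of dyadic levels is at most 4 ln m, using ln 2 > 1/2. *)
Lemma trunc_log2_ln (m : nat) : (2 <= m)%N -> INR (trunc_log 2 m).+1 <= 4 * ln (INR m).
Proof.
move=> m_ge2; set M := trunc_log 2 m.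
have M_ge1 : 1 <= INR M by apply: (INR_le (a := 1)); exact: trunc_log_max.
have M_ln2 : INR M * ln 2 <= ln (INR m).
  rewrite -ln_pow; last lra.
  apply: ln_le; first by apply: pow_lt; lra.
  by rewrite -INR_expn2; apply: INR_le; apply: trunc_logP; last exact: leq_trans m_ge2.
have := ln_lt_2; rewrite S_INR; nra.
Qed.

Lemma Rdiv_le_of_le_mul (a b c : R) : 0 < c -> a <= b * c -> a / c <= b.
Proof.
move=> c_pos le_abc; apply: (Rmult_le_reg_r c) => //.
by rewrite /Rdiv Rmult_assoc Rinv_l; lra.
Qed.

Lemma Rle_div_of_mul_le (a b c : R) : 0 < c -> a * c <= b -> a <= b / c.
Proof.
move=> c_pos le_acb; apply: (Rmult_le_reg_r c) => //.
by rewrite /Rdiv Rmult_assoc Rinv_l; lra.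
Qed.

Lemma ln_INR_pos (N : nat) : (2 <= N)%N -> 0 < ln (INR N).
Proof.
move=> N_ge2; have N_ge2R : 2 <= INR N by apply: (INR_le (a := 2)).
by rewrite -ln_1; apply: ln_increasing; lra.
Qed.

Lemma size_of_count (N Q d : nat) : (2 <= N)%N ->
  (4 * Q <= N * (trunc_log 2 N).+1 * d)%N -> INR Q / (INR N * ln (INR N)) <= INR d.
Proof.
move=> N_ge2 count; have ln_pos := ln_INR_pos N_ge2.
have N_ge2R : 2 <= INR N by apply: (INR_le (a := 2)).
apply: Rdiv_le_of_le_mul; first nra.
have := INR_le count; rewrite !INR_muln (_ : INR 4 = 4); last by rewrite /=; lra.
have := trunc_log2_ln N_ge2; have := pos_INR d; set m := INR _.+1 => d_pos m_le.
have : INR N * m * INR d <= INR N * (4 * ln (INR N)) * INR d.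
  by apply: Rmult_le_compat_r => //; apply: Rmult_le_compat_l; lra.
lra.
Qed.

(* The fan bound in the form of the theorem, with s = 2^(k+1). *)
Lemma fan_of_count (y c k : nat) (L P q : R) : 0 < P ->
  (y * 2 ^ k <= 2 * c)%N -> INR c <= 96 * L / P * q ->
  INR y <= 384 * L * q / (P * 2 ^ k.+1).
Proof.
move=> P_pos fan through.
have pow_pos : 0 < 2 ^ k by apply: pow_lt; lra.
apply: Rle_div_of_mul_le; first by rewrite /=; nra.
have := INR_le fan; rewrite !INR_muln INR_expn2 (_ : INR 2 = 2); last by rewrite /=; lra.
have : INR c * P <= 96 * L * q.
  have := Rmult_le_compat_r _ _ _ (Rlt_le _ _ P_pos) through.
  by rewrite (_ : 96 * L / P * q * P = 96 * L * q) //; field; lra.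
rewrite /=; nra.
Qed.

Unset Implicit Arguments. Set Strict Implicit.

Theorem lemma2p18 :
  forall eps K : R, 0 < eps -> eps < 1/6 -> 0 < K ->
  exists N : nat, forall (T : finType) (e : rel T),
    simple_graph e ->
    leq N #|T| ->
    let n := INR #|T| in
    (forall v : T, INR (deg e v) <= K * Rpower n (1/3 + eps)) ->
    let q := INR #|C4_copies e| in
    (forall u v : T, e u v ->
       INR (C4_through e u v) <= 96 * ln n / Rpower n (4/3 + eps) * q) ->
    exists (v : T) (s : R) (D : {set T * T * T}),
      0 < s /\
      (forall x y z, (x, y, z) \in D -> (z, y, x) \in D) /\
      INR #|D| >= q / (n * ln n) /\
      (forall x y z, (x, y, z) \in D ->
         uniq [:: v; x; y; z] /\ e v x /\ e x y /\ e y z /\ e z v) /\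
      (forall x y z, (x, y, z) \in D ->
         INR (codeg e v y) <= s /\ INR (codeg e x z) <= s) /\
      (forall x : T,
         INR #|[set y | [exists z, (x, y, z) \in D]]|
           <= 384 * ln n * q / (Rpower n (4/3 + eps) * s)).
Proof.
move=> eps K _ _ _; exists 2%N => T e [e_sym e_irr] n_ge2 n _ q through_bound.
have [v [k large_D]] := large_layer e_sym (ltnW n_ge2).
have P_pos : 0 < Rpower n (4/3 + eps) by apply: exp_pos.
have s_pos : 0 < 2 ^ k.+1 by apply: pow_lt; lra.
exists v, (2 ^ k.+1), (layer e v k); split => //.
split; first exact: layer_sym.
split; first exact/Rle_ge/size_of_count.
split; first by move=> x y z /layer_c4 /and5P[].
split.
  move=> x y z /(layer_codeg e_sym e_irr) [_ le_diag lt_pow].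
  have le_pow := INR_le (ltnW lt_pow); rewrite INR_expn2 in le_pow.
  by split; [|apply: Rle_trans (INR_le le_diag) _].
(* An empty fan is trivially bounded; a nonempty one forces vx to be an edge. *)
move=> x; have [-> | [y]] := set_0Vmem [set y | [exists z, (x, y, z) \in layer e v k]].
  have ln_n_pos : 0 < ln n := ln_INR_pos n_ge2.
  have q_nonneg : 0 <= q by apply: pos_INR.
  by rewrite cards0; apply: Rle_div_of_mul_le; [nra | rewrite Rmult_0_l; nra].
rewrite inE => /existsP[z /layer_c4 /and5P[_ vx _ _ _]].
exact: fan_of_count (layer_fan e_sym e_irr v k x) (through_bound v x vx).
Qed.
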